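(* Let $(\Re,S,V)$ be a vector $S$-metric space and let $H,K,P,Q:\Re\to\Re$ be four maps satisfying: (a) the pairs $(H,P)$ and $(K,Q)$ satisfy the $CLR_{(P,Q)}$ property, i.e. there exist sequences $(x_n)$, $(y_n)$ in $\Re$ and points $\xi,a,b\in\Re$ such that $Hx_n\to\xi$, $Px_n\to\xi$, $Ky_n\to\xi$, $Qy_n\to\xi$ (convergence in $(\Re,S,V)$) and $\xi=Pa=Qb$; (b) the pairs $(H,P)$ and $(K,Q)$ are weakly compatible; (c) there is $\rho\in[0,1)$ such that for all $x,y,z\in\Re$, $$S(Hx,Hy,Kz)\preceq \rho\, U(x,y,z),$$ where $$U(x,y,z)=\max\Big[S(Px,Py,Qz),\ S(Px,Px,Hx),\ S(Qz,Qz,Kz),\ \tfrac12\{S(Px,Py,Kz)+S(Qz,Qz,Hx)\}\Big]$$ (the maximum being the supremum in $V$). Then $H,K,P,Q$ have a unique common fixed point in $\Re$, i.e. there is exactly one $\xi\in\Re$ with $H\xi=K\xi=P\xi=Q\xi=\xi$.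
   Context: A vector lattice (Riesz space) $V$ is an ordered real vector space whose order $\preceq$ is a lattice order; $\max$ of finitely many elements of $V$ denotes their supremum. Given a vector lattice $V$ and a nonempty set $\Re$, a vector $S$-metric is a map $S:\Re^3\to V$ such that for all $x_1,x_2,x_3,\alpha\in\Re$: (a) $S(x_1,x_2,x_3)\succeq 0$; (b) $S(x_1,x_2,x_3)=0$ iff $x_1=x_2=x_3$; (c) $S(x_1,x_2,x_3)\preceq S(x_1,x_2,\alpha)+S(x_2,x_2,\alpha)+S(x_3,x_3,\alpha)$. The triple $(\Re,S,V)$ is a vector $S$-metric space. A sequence $(x_n)$ in $\Re$ converges to $x\in\Re$ if there is a sequence $(c_n)$ in $V$ decreasing with infimum $0$ such that $S(x_n,x_n,x)\preceq c_n$ for all $n$. Two maps $A,B:\Re\to\Re$ are weakly compatible if $ABx=BAx$ whenever $Ax=Bx$, $x\in\Re$. *)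

From HB Require Import structures.
From mathcomp Require Import all_boot all_order all_algebra.
From mathcomp Require Import reals.
Set Implicit Arguments. Unset Strict Implicit. Unset Printing Implicit Defensive.
Import Order.TTheory GRing.Theory Num.Theory.
Local Open Scope ring_scope.

(* A vector lattice (Riesz space) over the reals R : an R-vector space with a
   partial order compatible with the linear structure (translation invariant,
   invariant under nonnegative scaling) in which every two elements have a
   supremum [vmax].  (In an ordered vector space existence of binary suprema
   implies existence of binary infima: inf x y = - sup (-x) (-y).) *)
Record vectorLattice (R : realType) := VectorLattice {
  vcar :> lmodType R;
  vle : vcar -> vcar -> Prop;
  vle_refl : forall x, vle x x;
  vle_antisym : forall x y, vle x y -> vle y x -> x = y;
  vle_trans : forall x y z, vle x y -> vle y z -> vle x z;
  vle_add : forall x y z, vle x y -> vle (x + z) (y + z);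
  vle_scale : forall (a : R) x y, 0 <= a -> vle x y -> vle (a *: x) (a *: y);
  vmax : vcar -> vcar -> vcar;
  vmax_ubl : forall x y, vle x (vmax x y);
  vmax_ubr : forall x y, vle y (vmax x y);
  vmax_least : forall x y z, vle x z -> vle y z -> vle (vmax x y) z
}.

Arguments vle {R} v : rename.
Arguments vmax {R} v : rename.

Definition is_vSmetric (R : realType) (V : vectorLattice R) (X : Type)
  (S : X -> X -> X -> vcar V) : Prop :=
  (forall x1 x2 x3, vle V 0 (S x1 x2 x3)) /\
  (forall x1 x2 x3, S x1 x2 x3 = 0 <-> (x1 = x2 /\ x2 = x3)) /\
  (forall x1 x2 x3 a,
      vle V (S x1 x2 x3) (S x1 x2 a + S x2 x2 a + S x3 x3 a)).

Definition decr_to_zero (R : realType) (V : vectorLattice R) (c : nat -> vcar V) : Prop :=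
  (forall n, vle V (c n.+1) (c n)) /\
  (forall n, vle V 0 (c n)) /\
  (forall w, (forall n, vle V w (c n)) -> vle V w 0).

Definition vS_converges (R : realType) (V : vectorLattice R) (X : Type)
  (S : X -> X -> X -> vcar V) (x : nat -> X) (l : X) : Prop :=
  exists c : nat -> vcar V, decr_to_zero c /\ forall n, vle V (S (x n) (x n) l) (c n).

Definition weakly_compatible (X : Type) (A B : X -> X) : Prop :=
  forall x, A x = B x -> A (B x) = B (A x).

Definition CLR_PQ (R : realType) (V : vectorLattice R) (X : Type)
  (S : X -> X -> X -> vcar V) (H P K Q : X -> X) : Prop :=
  exists (x y : nat -> X) (xi a b : X),
    vS_converges S (fun n => H (x n)) xi /\ vS_converges S (fun n => P (x n)) xi /\
    vS_converges S (fun n => K (y n)) xi /\ vS_converges S (fun n => Q (y n)) xi /\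
    xi = P a /\ xi = Q b.

From HB Require Import structures.
From mathcomp Require Import all_boot all_order all_algebra.
From mathcomp Require Import reals.
Import Order.TTheory GRing.Theory Num.Theory.
Local Open Scope ring_scope.
Set Implicit Arguments. Unset Strict Implicit.

(* Both coincidence points are obtained from the same estimate: if x_n -> l and
   S(x_n, x_n, w) <= rho M_n with M_n <= S(l, l, w) + (a null sequence), the
   triangle inequality through x_n gives S(l, l, w) <= rho S(l, l, w) + (a null
   sequence), and in a vector lattice this forces S(l, l, w) = 0 as rho < 1.
   Applied to x_n = H x_n and x_n = K y_n this yields K b = Q b = xi and
   H a = P a = xi; weak compatibility turns xi into a coincidence point of both
   pairs, and the same estimate for constant sequences makes it a common fixed
   point and shows its uniqueness. *)

Section VectorLattice.
Variables (R : realType) (V : vectorLattice R).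
Local Notation le := (vle V).

Lemma vle_addl (x y z : V) : le x y -> le (z + x) (z + y).
Proof. by move=> lexy; rewrite ![z + _]addrC; apply: vle_add. Qed.

Lemma vle_add2 (a b c d : V) : le a b -> le c d -> le (a + c) (b + d).
Proof.
by move=> leab lecd; apply: (vle_trans (y := b + c)); [apply: vle_add | apply: vle_addl].
Qed.

Lemma vle_wpDr (a b c : V) : le 0 c -> le a b -> le a (b + c).
Proof. by move=> ge0c leab; rewrite -(addr0 a); apply: vle_add2. Qed.

Lemma vle_wpDl (a b c : V) : le 0 c -> le a b -> le a (c + b).
Proof. by rewrite addrC; apply: vle_wpDr. Qed.

Lemma vaddr_ge0 (a b : V) : le 0 a -> le 0 b -> le 0 (a + b).
Proof. by move=> ge0a ge0b; have := vle_add2 ge0a ge0b; rewrite addr0. Qed.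

Lemma vscaler_ge0 (a : R) (x : V) : 0 <= a -> le 0 x -> le 0 (a *: x).
Proof. by move=> ge0a ge0x; rewrite -(scaler0 _ a); apply: vle_scale. Qed.

Lemma vle_pscale2l (a : R) (x y : V) : 0 < a -> le (a *: x) (a *: y) -> le x y.
Proof.
move=> gt0a; have ge0Va : 0 <= a^-1 by rewrite invr_ge0 ltW.
by move/(vle_scale ge0Va); rewrite !scalerA mulVf ?gt_eqF // !scale1r.
Qed.

Lemma vle_halfD (a b M : V) : le a M -> le b M -> le ((2 : R)^-1 *: (a + b)) M.
Proof.
move=> leaM lebM; have -> : M = (2 : R)^-1 *: (M + M).
  by rewrite -mulr2n -scaler_nat scalerA mulVf ?pnatr_eq0 // scale1r.
by apply: vle_scale; [rewrite invr_ge0 | apply: vle_add2].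
Qed.

Lemma decr_to_zero_le (c : nat -> V) : decr_to_zero c ->
  forall m k, (m <= k)%N -> le (c k) (c m).
Proof.
move=> [decr_c _] m k /subnK <-; elim: (k - m)%N => [|j IHj]; first exact: vle_refl.
by rewrite addSn; apply: vle_trans (decr_c _) IHj.
Qed.

Lemma decr_to_zero0 : decr_to_zero (fun _ : nat => 0 : V).
Proof. by split; [|split]; [move=> n; exact: vle_refl.. | move=> w /(_ 0%N)]. Qed.

Lemma decr_to_zeroD (c d : nat -> V) : decr_to_zero c -> decr_to_zero d ->
  decr_to_zero (fun n => c n + d n).
Proof.
move=> dc dd; have [decr_c [ge0c infc]] := dc; have [decr_d [ge0d infd]] := dd.
split; [|split]; [by move=> n; apply: vle_add2 | by move=> n; apply: vaddr_ge0|].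
move=> w lew.
have le_wBd n m : le (w - d n) (c m).
  have : le w (c m + d n).
    apply: vle_trans (lew (maxn n m)) _.
    by apply: vle_add2; apply: decr_to_zero_le; rewrite ?leq_maxl ?leq_maxr.
  by move/(vle_add (- d n)); rewrite addrK.
apply: infd => n.
by have := vle_add (d n) (infc _ (le_wBd n)); rewrite subrK add0r.
Qed.

Lemma decr_to_zeroZ (a : R) (c : nat -> V) : 0 <= a -> decr_to_zero c ->
  decr_to_zero (fun n => a *: c n).
Proof.
move=> ge0a [decr_c [ge0c infc]]; split; [|split].
- by move=> n; apply: vle_scale.
- by move=> n; apply: vscaler_ge0.
move=> w lew; have [a0|neq0a] := eqVneq a 0.
  by have := lew 0%N; rewrite a0 scale0r.
have gt0a : 0 < a by rewrite lt_def neq0a.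
rewrite -[w](scalerKV neq0a) -(scaler0 _ a).
apply: vle_scale ge0a _; apply: infc => n; apply: (vle_pscale2l gt0a).
by rewrite scalerKV.
Qed.

(* [vS_converges S x l] unfolds to [vnull (fun n => S (x n) (x n) l)]. *)
Definition vnull (f : nat -> V) : Prop :=
  exists c : nat -> V, decr_to_zero c /\ forall n, le (f n) (c n).

Lemma vnull0 : vnull (fun _ => 0).
Proof. by exists (fun _ => 0); split; [exact: decr_to_zero0 | move=> n; exact: vle_refl]. Qed.

Lemma vnullD (f g : nat -> V) : vnull f -> vnull g -> vnull (fun n => f n + g n).
Proof.
move=> [c [dc lefc]] [d [dd legd]]; exists (fun n => c n + d n).
by split; [exact: decr_to_zeroD | move=> n; apply: vle_add2].
Qed.

Lemma vnullZ (a : R) (f : nat -> V) : 0 <= a -> vnull f -> vnull (fun n => a *: f n).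
Proof.
move=> ge0a [c [dc lefc]]; exists (fun n => a *: c n).
by split; [exact: decr_to_zeroZ | move=> n; apply: vle_scale].
Qed.

Lemma vle_contraction (rho : R) (u : V) (g : nat -> V) : rho < 1 ->
  le 0 u -> vnull g -> (forall n, le u (rho *: u + g n)) -> u = 0.
Proof.
move=> lt1rho ge0u [c [[_ [_ infc]] legc]] leu.
have gt0 : 0 < 1 - rho by rewrite subr_gt0.
have le0 : le ((1 - rho) *: u) 0.
  apply: infc => n; apply: vle_trans (legc n).
  by have := vle_add (- (rho *: u)) (leu n); rewrite addrAC subrr add0r scalerBl scale1r.
have := vle_antisym le0 (vscaler_ge0 (ltW gt0) ge0u).
by move/(congr1 ( *:%R (1 - rho)^-1)); rewrite scalerK ?gt_eqF // scaler0.
Qed.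

End VectorLattice.

Section VectorSMetric.
Variables (R : realType) (V : vectorLattice R) (X : Type) (S : X -> X -> X -> vcar V).
Hypothesis S_metric : is_vSmetric S.
Local Notation le := (vle V).

Lemma vS_ge0 x y z : le 0 (S x y z).
Proof. by case: S_metric. Qed.

Lemma vS_triangle x y z a : le (S x y z) (S x y a + S y y a + S z z a).
Proof. by case: S_metric => _ []. Qed.

Lemma vS_same x : S x x x = 0.
Proof. by case: S_metric => _ [S0 _]; apply/S0. Qed.

Lemma vS_eq0 x y : S x x y = 0 -> x = y.
Proof. by case: S_metric => _ [S0 _] /S0 []. Qed.

Lemma vS_sym x y : S x x y = S y y x.
Proof.
by apply: vle_antisym; [have := vS_triangle x x y x | have := vS_triangle y y x y];
  rewrite vS_same !add0r.
Qed.

Lemma vS_limit_contraction (rho : R) (x : nat -> X) (l w : X) (M e : nat -> V) :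
  0 <= rho -> rho < 1 -> vS_converges S x l -> vnull e ->
  (forall n, le (S (x n) (x n) w) (rho *: M n)) ->
  (forall n, le (M n) (S l l w + e n)) -> l = w.
Proof.
move=> ge0rho lt1rho xl nulle leSM leMe; apply: vS_eq0.
apply: (vle_contraction lt1rho (vS_ge0 _ _ _)
  (g := fun n => S (x n) (x n) l + S (x n) (x n) l + rho *: e n)).
  by apply: vnullD; [apply: vnullD | apply: vnullZ].
move=> n; apply: vle_trans (vS_triangle l l w (x n)) _.
rewrite !(vS_sym _ (x n)) addrCA -scalerDr.
apply: vle_add2; first exact: vle_refl.
by apply: vle_trans (leSM n) _; apply: vle_scale.
Qed.

Lemma vS_contraction (rho : R) (p q : X) (M : V) : 0 <= rho -> rho < 1 ->
  le (S p p q) (rho *: M) -> le M (S p p q) -> p = q.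
Proof.
move=> ge0rho lt1rho leSM leM.
apply: (vS_limit_contraction (x := fun=> p) (M := fun=> M) ge0rho lt1rho _ (vnull0 V)) => //.
- by exists (fun=> 0); split; [exact: decr_to_zero0 | move=> n; rewrite vS_same; exact: vle_refl].
- by move=> n; rewrite addr0.
Qed.

End VectorSMetric.

Lemma weakly_compatible_coincidence (X : Type) (A B : X -> X) (a xi : X) :
  weakly_compatible A B -> A a = xi -> B a = xi -> A xi = B xi.
Proof. by move=> wAB Aa Ba; have := wAB a; rewrite Aa Ba; apply. Qed.

Section CommonFixedPoint.
Variables (R : realType) (V : vectorLattice R) (X : Type) (S : X -> X -> X -> vcar V).
Variables (H K P Q : X -> X) (rho : R).
Hypotheses (S_metric : is_vSmetric S) (ge0rho : 0 <= rho) (lt1rho : rho < 1).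
Local Notation le := (vle V).

Definition U x y z :=
  vmax V (S (P x) (P y) (Q z))
    (vmax V (S (P x) (P x) (H x))
      (vmax V (S (Q z) (Q z) (K z))
        ((2 : R)^-1 *: (S (P x) (P y) (K z) + S (Q z) (Q z) (H x))))).

Hypothesis contractive : forall x y z, le (S (H x) (H y) (K z)) (rho *: U x y z).

Lemma U_le x y z (M : V) :
  le (S (P x) (P y) (Q z)) M -> le (S (P x) (P x) (H x)) M ->
  le (S (Q z) (Q z) (K z)) M -> le (S (P x) (P y) (K z)) M ->
  le (S (Q z) (Q z) (H x)) M -> le (U x y z) M.
Proof. by move=> *; do 3 (apply: vmax_least => //); apply: vle_halfD. Qed.

Let vS_ge0 := vS_ge0 S_metric.
Let vS_triangle := vS_triangle S_metric.
Let vS_same := vS_same S_metric.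
Let vS_sym := vS_sym S_metric.

Lemma K_coincidence (x : nat -> X) (xi b : X) :
  vS_converges S (fun n => H (x n)) xi -> vS_converges S (fun n => P (x n)) xi ->
  Q b = xi -> K b = xi.
Proof.
move=> Hx Px Qb; set u := S xi xi (K b).
pose e n :=
  S (P (x n)) (P (x n)) xi + S (P (x n)) (P (x n)) xi + S (H (x n)) (H (x n)) xi.
have ge0e n : le 0 (e n) by rewrite /e; do 2 apply: vaddr_ge0 => //.
apply/esym; apply: (vS_limit_contraction S_metric (M := fun n => U (x n) (x n) b) (e := e)
  ge0rho lt1rho Hx).
- by apply: vnullD; [apply: vnullD|].
- by move=> n; apply: contractive.
move=> n; apply: U_le; rewrite ?Qb.
- apply: vle_wpDl; first exact: vS_ge0.
  by rewrite /e -addrA; apply: vle_wpDr; [apply: vaddr_ge0 | apply: vle_refl].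
- by apply: vle_wpDl; [apply: vS_ge0 | apply: vS_triangle].
- by apply: vle_wpDr => //; apply: vle_refl.
- apply: vle_trans (vS_triangle _ _ _ xi) _; rewrite (vS_sym (K b)) -/u addrC.
  by apply: vle_add2; [apply: vle_refl | apply: vle_wpDr => //; apply: vle_refl].
- rewrite vS_sym; apply: vle_wpDl; first exact: vS_ge0.
  by apply: vle_wpDl; [apply: vaddr_ge0 | apply: vle_refl].
Qed.

Lemma H_coincidence (y : nat -> X) (xi a : X) :
  vS_converges S (fun n => K (y n)) xi -> vS_converges S (fun n => Q (y n)) xi ->
  P a = xi -> H a = xi.
Proof.
move=> Ky Qy Pa; set v := S xi xi (H a).
pose e n :=
  S (Q (y n)) (Q (y n)) xi + S (Q (y n)) (Q (y n)) xi + S (K (y n)) (K (y n)) xi.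
have ge0e n : le 0 (e n) by rewrite /e; do 2 apply: vaddr_ge0 => //.
apply/esym; apply: (vS_limit_contraction S_metric (M := fun n => U a a (y n)) (e := e)
  ge0rho lt1rho Ky).
- by apply: vnullD; [apply: vnullD|].
- by move=> n; rewrite vS_sym; apply: contractive.
move=> n; apply: U_le; rewrite ?Pa.
- rewrite vS_sym; apply: vle_wpDl; first exact: vS_ge0.
  by rewrite /e -addrA; apply: vle_wpDr; [apply: vaddr_ge0 | apply: vle_refl].
- by apply: vle_wpDr => //; apply: vle_refl.
- by apply: vle_wpDl; [apply: vS_ge0 | apply: vS_triangle].
- rewrite vS_sym; apply: vle_wpDl; first exact: vS_ge0.
  by apply: vle_wpDl; [apply: vaddr_ge0 | apply: vle_refl].
- apply: vle_trans (vS_triangle _ _ _ xi) _; rewrite (vS_sym (H a)) -/v addrC.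
  by apply: vle_add2; [apply: vle_refl | apply: vle_wpDr => //; apply: vle_refl].
Qed.

Lemma H_fixed (xi b : X) : H xi = P xi -> K b = xi -> Q b = xi -> H xi = xi.
Proof.
move=> HP Kb Qb; apply: (vS_contraction S_metric (M := U xi xi b) ge0rho lt1rho).
  by have := contractive xi xi b; rewrite Kb.
by apply: U_le; rewrite -?HP ?Qb ?Kb ?vS_same ?(vS_sym xi);
  first [exact: vle_refl | exact: vS_ge0].
Qed.

Lemma K_fixed (xi a : X) : K xi = Q xi -> H a = xi -> P a = xi -> K xi = xi.
Proof.
move=> KQ Ha Pa; apply/esym/(vS_contraction S_metric (M := U a a xi) ge0rho lt1rho).
  by have := contractive a a xi; rewrite Ha.
by apply: U_le; rewrite -?KQ ?Pa ?Ha ?vS_same ?(vS_sym (K xi));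
  first [exact: vle_refl | exact: vS_ge0].
Qed.

Lemma common_fixed_point_unique (xi z : X) :
  H xi = xi -> P xi = xi -> K z = z -> Q z = z -> xi = z.
Proof.
move=> Hxi Pxi Kz Qz; apply: (vS_contraction S_metric (M := U xi xi z) ge0rho lt1rho).
  by have := contractive xi xi z; rewrite Hxi Kz.
by apply: U_le; rewrite ?Hxi ?Pxi ?Kz ?Qz ?vS_same ?(vS_sym z);
  first [exact: vle_refl | exact: vS_ge0].
Qed.

End CommonFixedPoint.

Theorem theorem2p1 (R : realType) (V : vectorLattice R) (X : Type)
  (S : X -> X -> X -> vcar V) (H K P Q : X -> X) (rho : R) :
  is_vSmetric S ->
  CLR_PQ S H P K Q ->
  weakly_compatible H P -> weakly_compatible K Q ->
  0 <= rho -> rho < 1 ->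
  (forall x y z,
     vle V (S (H x) (H y) (K z))
       (rho *: vmax V (S (P x) (P y) (Q z))
                 (vmax V (S (P x) (P x) (H x))
                   (vmax V (S (Q z) (Q z) (K z))
                     ((2 : R)^-1 *: (S (P x) (P y) (K z) + S (Q z) (Q z) (H x))))))) ->
  exists! xi : X, H xi = xi /\ K xi = xi /\ P xi = xi /\ Q xi = xi.
Proof.
move=> S_metric [x [y [xi [a [b [Hx [Px [Ky [Qy [/esym Pa /esym Qb]]]]]]]]]]
  wHP wKQ ge0rho lt1rho contr.
have Kb : K b = xi := K_coincidence S_metric ge0rho lt1rho contr Hx Px Qb.
have Ha : H a = xi := H_coincidence S_metric ge0rho lt1rho contr Ky Qy Pa.
have HP : H xi = P xi := weakly_compatible_coincidence wHP Ha Pa.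
have KQ : K xi = Q xi := weakly_compatible_coincidence wKQ Kb Qb.
have Hxi : H xi = xi := H_fixed S_metric ge0rho lt1rho contr HP Kb Qb.
have Kxi : K xi = xi := K_fixed S_metric ge0rho lt1rho contr KQ Ha Pa.
exists xi; split; first by rewrite -HP -KQ Hxi Kxi.
move=> z [_ [Kz [_ Qz]]].
by apply: (common_fixed_point_unique S_metric ge0rho lt1rho contr Hxi _ Kz Qz); rewrite -HP.
Qed.
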